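(* Let $p$ be a prime, $r\geq 1$ and $d\geq 0$. Then $$\sum_{\lambda\in\mathrm{Par}(d)}\Big(\sum_{i=0}^{r-1}l(\lambda^{(i)})+d_p(\lambda^{(r-1)})\Big)=l(d).$$
   Context: $\mathrm{Par}(d)$ is the set of partitions of $d$; $m_n(\lambda)$ denotes the multiplicity of the part $n$ in $\lambda$, $l(\lambda)$ the number of parts, and $l(d)=\sum_{\lambda\in\mathrm{Par}(d)}l(\lambda)$. The $p$-adic decomposition of $\lambda$ is $\lambda=\lambda^{(0)}+p\lambda^{(1)}+p^2\lambda^{(2)}+\cdots$, where each $\lambda^{(i)}$ is a partition with no part divisible by $p$, determined by $m_n(\lambda^{(i)})=m_{p^in}(\lambda)$ for all $n$ with $p\nmid n$ (so $\lambda^{(i)}$ consists of the parts of $\lambda$ of $p$-adic valuation exactly $i$, divided by $p^i$). For an integer $a\geq0$, $d_p(a)=\sum_{j\geq1}\lfloor a/p^j\rfloor$, and for a partition $\mu$, $d_p(\mu)=\sum_{n\geq1}d_p(m_n(\mu))$. *)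

From mathcomp Require Import all_boot.
Set Implicit Arguments. Unset Strict Implicit. Unset Printing Implicit Defensive.

Definition is_partition (d : nat) (s : seq nat) : bool :=
  [&& sorted geq s, all (fun x => 0 < x) s & sumn s == d].

(* Every partition of d
   has at most d parts, each at most d, so it is obtained from some
   d-tuple with entries in [0, d] by deleting the zero entries. *)
Definition Par (d : nat) : seq (seq nat) :=
  [seq s <- undup [seq [seq val x | x <- (t : seq 'I_d.+1) & 0 < val x]
                  | t : d.-tuple 'I_d.+1]
     | is_partition d s].

Definition mult (n : nat) (lam : seq nat) : nat := count_mem n lam.

Definition len (lam : seq nat) : nat := size lam.

Definition ltot (d : nat) : nat := \sum_(lam <- Par d) len lam.

Definition padic_comp (p i : nat) (lam : seq nat) : seq nat :=
  [seq x %/ p ^ i | x <- lam & logn p x == i].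

(* d_p(a) = sum_{j>=1} floor(a / p^j); for p >= 2 terms with j > a vanish. *)
Definition dp_nat (p a : nat) : nat := \sum_(1 <= j < a.+1) a %/ p ^ j.

(* d_p(mu) = sum_{n>=1} d_p(m_n(mu)); m_n(mu) = 0 for n > sumn mu. *)
Definition dp_part (p : nat) (mu : seq nat) : nat :=
  \sum_(1 <= n < (sumn mu).+1) dp_nat p (mult n mu).

From mathcomp Require Import all_boot.
Set Implicit Arguments. Unset Strict Implicit. Unset Printing Implicit Defensive.

(* Write v(x) for the p-adic valuation of x and m_a(lam) for the number of
   parts of lam equal to a.  Every part of lam has a valuation, so
     l(lam) = sum_{i<r} l(lam^(i)) + #{parts x of lam with v(x) >= r},
   and the theorem reduces to
     sum_lam d_p(lam^(r-1)) = sum_lam #{parts x of lam with v(x) >= r}.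
   Since m_n(lam^(r-1)) = m_{p^(r-1) n}(lam) for p coprime to n, the left side
   expands into sum_{p \notdvd n} sum_{j>=1} sum_lam m_a(lam) / p^j with
   a = p^(r-1) n, while unique factorisation x = p^j p^(r-1) n (j >= 1,
   p \notdvd n) of the parts with v(x) >= r expands the right side into the
   same double sum of sum_lam m_{p^j a}(lam).  The two agree term by term
   by a Glaisher-type identity, valid for all a, t > 0:
     sum_{lam |- d} floor(m_a(lam) / t) = sum_{lam |- d} m_{t a}(lam),
   because both sides equal sum_{j>=1} |Par(d - j t a)|: removing c copies
   of a part a is a bijection from the partitions of d with m_a >= c onto
   Par(d - c a). *)

Lemma mem_le_sumn (s : seq nat) x : x \in s -> x <= sumn s.
Proof.
elim: s => //= y s IH; rewrite in_cons => /orP[/eqP->|/IH]; first exact: leq_addr.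
by move/leq_trans; apply; rewrite leq_addl.
Qed.

Lemma size_le_sumn (s : seq nat) : all (fun x => 0 < x) s -> size s <= sumn s.
Proof.
elim: s => //= x s IH /andP[x_gt0 /IH]; rewrite -add1n; exact: leq_add.
Qed.

Lemma sum_indicator T (s : seq T) (P : pred T) : \sum_(x <- s) (P x : nat) = count P s.
Proof. by elim: s => [|x s IH]; rewrite ?big_nil // big_cons IH. Qed.

Lemma sum_nat_eq m n k : \sum_(m <= i < n) (k == i : nat) = (m <= k < n).
Proof.
rewrite -mem_index_iota -count_uniq_mem ?iota_uniq // -sum_indicator.
by apply: eq_bigr => i _; rewrite eq_sym.
Qed.

Lemma geq_trans : transitive geq. Proof. exact: rev_trans leq_trans. Qed.
Lemma geq_anti : antisymmetric geq.
Proof. by move=> x y le_xy; apply: anti_leq; rewrite andbC. Qed.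
Lemma geq_total : total geq. Proof. by move=> x y; exact: leq_total. Qed.

Lemma Par_uniq d : uniq (Par d).
Proof. by rewrite /Par filter_uniq // undup_uniq. Qed.

Lemma mem_Par d s : (s \in Par d) = is_partition d s.
Proof.
rewrite /Par mem_filter; case partS: (is_partition d s) => //=.
rewrite mem_undup; case/and3P: partS => _ s_pos /eqP sumS.
have s_small x : x \in s -> x < d.+1 by move=> xs; rewrite ltnS -sumS mem_le_sumn.
(* pad s with zeros to a d-tuple of elements of 'I_d.+1 *)
pose s0 := s ++ nseq (d - size s) 0.
have size_s0 : size (map (@inord d) s0) == d.
  by rewrite size_map size_cat size_nseq subnKC // -sumS size_le_sumn.
apply/mapP; exists (Tuple size_s0); first by rewrite mem_enum.
rewrite /= filter_map -map_comp /s0 filter_cat.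
rewrite (@eq_in_filter _ _ pred0 (nseq _ 0)); last by move=> x /nseqP[-> _]; rewrite /= inordK.
rewrite filter_pred0 cats0 (@eq_in_filter _ _ predT); last first.
  by move=> x xs; rewrite /= inordK ?s_small ?(allP s_pos).
by rewrite filter_predT -[LHS]map_id; apply/eq_in_map => x /s_small /= /inordK.
Qed.

Lemma Par_count_le d a l : l \in Par d -> a * count_mem a l <= d.
Proof.
rewrite mem_Par => /and3P[_ _ /eqP <-]; elim: l => [|x l IH] /=; first by rewrite muln0.
by rewrite mulnDr leq_add //; case: eqP => [->|_]; rewrite ?muln1 ?muln0.
Qed.

Section RemoveParts.
Variables (c a : nat).

Definition remn (s : seq nat) : seq nat := iter c (rem a) s.

Lemma remn_subseq s : subseq (remn s) s.
Proof.
rewrite /remn; elim: c => [|k IH] /=; first exact: subseq_refl.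
exact: subseq_trans (rem_subseq _ _) IH.
Qed.

Lemma remn_perm s : c <= count_mem a s -> perm_eq s (nseq c a ++ remn s).
Proof.
rewrite /remn; elim: c => [|k IH] le_k; first exact: perm_refl.
have {IH}perm_k := IH (ltnW le_k).
have a_in : a \in iter k (rem a) s.
  rewrite -has_pred1 has_count -(leq_add2l k) addn1.
  by move: le_k; rewrite (permP perm_k) count_cat count_nseq /= eqxx mul1n.
apply: (perm_trans perm_k); rewrite iterS /= -cat1s perm_sym perm_catCA perm_cat2l cat1s perm_sym.
exact: perm_to_rem.
Qed.

Lemma remn_sort m : sorted geq m -> remn (sort geq (nseq c a ++ m)) = m.
Proof.
move=> sorted_m; pose l := sort geq (nseq c a ++ m); rewrite -/l.
have perm_l : perm_eq (nseq c a ++ m) l by rewrite perm_sym perm_sort.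
have le_c : c <= count_mem a l.
  by rewrite -(permP perm_l) count_cat count_nseq /= eqxx mul1n leq_addr.
apply: (sorted_eq geq_trans geq_anti) => //.
  apply: (subseq_sorted geq_trans (remn_subseq _)); exact: sort_sorted geq_total _.
rewrite -(perm_cat2l (nseq c a)) perm_sym; exact: perm_trans perm_l (remn_perm le_c).
Qed.

Lemma sort_remn l : sorted geq l -> c <= count_mem a l ->
  sort geq (nseq c a ++ remn l) = l.
Proof.
move=> sorted_l le_c; apply: (sorted_eq geq_trans geq_anti) => //.
  exact: sort_sorted geq_total _.
by rewrite perm_sort perm_sym remn_perm.
Qed.

Lemma remn_Par d : 0 < a -> c * a <= d ->
  perm_eq [seq remn l | l <- Par d & c <= count_mem a l] (Par (d - c * a)).
Proof.
move=> a_gt0 le_ca_d.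
have remn_in l : l \in Par d -> c <= count_mem a l -> remn l \in Par (d - c * a).
  rewrite !mem_Par => /and3P[sorted_l l_pos /eqP sum_l] le_c.
  have sub_l := remn_subseq l.
  apply/and3P; split; first exact: (subseq_sorted geq_trans sub_l).
    by apply/allP => x /(mem_subseq sub_l); apply/allP.
  by rewrite -sum_l (perm_sumn (remn_perm le_c)) sumn_cat sumn_nseq mulnC addKn.
have sort_in m : m \in Par (d - c * a) ->
    sort geq (nseq c a ++ m) \in [seq l <- Par d | c <= count_mem a l].
  rewrite mem_Par => /and3P[sorted_m m_pos /eqP sum_m]; rewrite mem_filter mem_Par.
  have perm_m := permEl (perm_sort geq (nseq c a ++ m)).
  rewrite (permP perm_m) count_cat count_nseq /= eqxx mul1n leq_addr /=.
  apply/and3P; split; first exact: sort_sorted geq_total _.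
    by rewrite (perm_all _ perm_m) all_cat m_pos andbT; apply/allP => x /nseqP[->].
  by rewrite (perm_sumn perm_m) sumn_cat sumn_nseq sum_m mulnC subnKC.
have remnK l : l \in [seq l <- Par d | c <= count_mem a l] ->
    sort geq (nseq c a ++ remn l) = l.
  by rewrite mem_filter mem_Par => /andP[le_c /and3P[sorted_l _ _]]; apply: sort_remn.
apply: uniq_perm.
- rewrite map_inj_in_uniq; first exact/filter_uniq/Par_uniq.
  by move=> x y /remnK {2}<- /remnK {2}<- ->.
- exact: Par_uniq.
move=> m; apply/mapP/idP => [[l] | mP].
  by rewrite mem_filter => /andP[le_c lP] ->; apply: remn_in.
exists (sort geq (nseq c a ++ m)); first exact: sort_in.
by rewrite remn_sort //; move: mP; rewrite mem_Par => /and3P[].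
Qed.

Lemma count_Par_mult_ge d : 0 < a ->
  count (fun l => c <= count_mem a l) (Par d) =
  if c * a <= d then size (Par (d - c * a)) else 0.
Proof.
move=> a_gt0; case: leqP => [le_ca_d | lt_d_ca].
  by rewrite -size_filter -(perm_size (remn_Par a_gt0 le_ca_d)) size_map.
apply/eqP; rewrite -leqn0 leqNgt -has_count; apply/hasPn => l /(Par_count_le a) le_d.
apply/negP => le_c; suff: c * a <= d by rewrite leqNgt lt_d_ca.
by apply: leq_trans le_d; rewrite mulnC leq_mul2l le_c orbT.
Qed.

End RemoveParts.

Lemma divn_as_count m t N : 0 < t -> m <= N ->
  m %/ t = \sum_(1 <= j < N.+1) (j * t <= m : nat).
Proof.
move=> t_gt0 le_mN; have le_qN : m %/ t <= N := leq_trans (leq_div m t) le_mN.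
rewrite (big_cat_nat _ (n := (m %/ t).+1)) //= addnC big_nat big1 ?add0n; last first.
  by move=> j /andP[lt_qj _]; rewrite -leq_divRL // leqNgt lt_qj.
rewrite big_nat (eq_bigr (fun _ => 1)) => [|j /andP[_ le_jq]]; last first.
  by rewrite -leq_divRL // -ltnS le_jq.
by rewrite -big_nat sum_nat_const_nat subn1 muln1.
Qed.

Lemma sum_Par_mult_div_count d a t : 0 < a -> 0 < t ->
  \sum_(l <- Par d) (count_mem a l %/ t) =
  \sum_(1 <= j < d.+1) (if j * t * a <= d then size (Par (d - j * t * a)) else 0).
Proof.
move=> a_gt0 t_gt0.
rewrite (eq_big_seq (fun l => \sum_(1 <= j < d.+1) (j * t <= count_mem a l : nat))).
  by rewrite exchange_big; apply: eq_bigr => j _; rewrite sum_indicator count_Par_mult_ge.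
move=> l /(Par_count_le a) le_d; apply: divn_as_count => //.
exact: leq_trans (leq_pmull _ a_gt0) le_d.
Qed.

Lemma sum_Par_mult_div d a t : 0 < a -> 0 < t ->
  \sum_(l <- Par d) (count_mem a l %/ t) = \sum_(l <- Par d) count_mem (t * a) l.
Proof.
move=> a_gt0 t_gt0; rewrite -[RHS](eq_bigr _ (fun l _ => divn1 _)).
rewrite !sum_Par_mult_div_count ?muln_gt0 ?a_gt0 ?t_gt0 //.
by apply: eq_bigr => j _; rewrite muln1 mulnA.
Qed.

Lemma padic_comp_size p i s : size (padic_comp p i s) <= size s.
Proof. by rewrite /padic_comp size_map size_filter count_size. Qed.

Lemma padic_comp_sumn p i s : sumn (padic_comp p i s) <= sumn s.
Proof.
rewrite /padic_comp; elim: s => //= x s IH; case: (logn p x == i) => /=.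
  exact: leq_add (leq_div _ _) IH.
exact: leq_trans IH (leq_addl _ _).
Qed.

Lemma len_padic_split p r l :
  len l = \sum_(0 <= i < r) len (padic_comp p i l) + count (fun x => r <= logn p x) l.
Proof.
have -> : \sum_(0 <= i < r) len (padic_comp p i l) = count (fun x => logn p x < r) l.
  rewrite (eq_bigr (fun i => count (fun x => logn p x == i) l)); last first.
    by move=> i _; rewrite /len /padic_comp size_map size_filter.
  elim: l => [|x l IH] /=; first by rewrite big1.
  by rewrite big_split /= sum_nat_eq IH.
rewrite /len -(count_predC (fun x => logn p x < r)); congr (_ + _).
by apply: eq_count => x /=; rewrite -leqNgt.
Qed.

Lemma dp_nat_ext p m N : 1 < p -> m <= N ->
  dp_nat p m = \sum_(1 <= j < N.+1) m %/ p ^ j.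
Proof.
move=> p_gt1 le_mN; rewrite [RHS](big_cat_nat _ (n := m.+1)) //= addnC big_nat big1 //.
by move=> j /andP[lt_mj _]; rewrite divn_small // (leq_trans lt_mj) // ltnW // ltn_expl.
Qed.

Lemma dp_part_ext p mu N : 1 < p -> sumn mu <= N -> size mu <= N ->
  dp_part p mu = \sum_(1 <= n < N.+1) \sum_(1 <= j < N.+1) mult n mu %/ p ^ j.
Proof.
move=> p_gt1 le_sum le_size.
rewrite [RHS](big_cat_nat _ (n := (sumn mu).+1)) //= addnC big_nat big1 ?add0n.
  by apply: eq_bigr => n _; apply: dp_nat_ext => //; exact: leq_trans (count_size _ _) le_size.
move=> n /andP[lt_sum_n _]; rewrite big_nat big1 // => j _.
suff -> : mult n mu = 0 by rewrite div0n.
by apply/count_memPn; apply: contraTN lt_sum_n => /mem_le_sumn; rewrite -leqNgt.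
Qed.

Section PrimeBase.
Variable p : nat.
Hypothesis p_prime : prime p.

Lemma padic_factor_eq i n x : 0 < n ->
  ((logn p x == i) && (x %/ p ^ i == n)) = (~~ (p %| n) && (x == p ^ i * n)).
Proof.
move=> n_gt0; have pi_gt0 : 0 < p ^ i by rewrite expn_gt0 prime_gt0.
apply/idP/idP; last first.
  case/andP=> p_n /eqP ->; rewrite mulKn // eqxx andbT.
  by rewrite lognM // pfactorK // logn_coprime ?addn0 // prime_coprime.
case/andP=> /eqP val_x /eqP quo_x.
have x_gt0 : 0 < x by rewrite lt0n; apply: contraTneq n_gt0 => x0; rewrite -quo_x x0 div0n.
have [m cop_m x_def] := pfactor_coprime p_prime x_gt0.
rewrite val_x in x_def.
by rewrite -quo_x x_def mulnK // -prime_coprime // cop_m mulnC eqxx.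
Qed.

Lemma mult_padic_comp i n l : 0 < n ->
  mult n (padic_comp p i l) = (~~ (p %| n)) * count_mem (p ^ i * n) l.
Proof.
move=> n_gt0; rewrite /mult /padic_comp count_map count_filter.
rewrite [LHS](eq_count (a2 := fun x => ~~ (p %| n) && (x == p ^ i * n))); last first.
  by move=> x /=; rewrite andbC padic_factor_eq.
by case: (~~ (p %| n)); rewrite ?mul1n ?mul0n //= count_pred0.
Qed.

(* A part x of valuation v(x) >= r factors uniquely as x = p^j p^(r-1) n
   with j >= 1 and p coprime to n; for x <= d both j and n are <= d. *)
Lemma high_valuation_indicator r d x : 0 < r -> 0 < x <= d ->
  \sum_(1 <= n < d.+1) \sum_(1 <= j < d.+1)
     ((~~ (p %| n)) * (x == p ^ j * (p ^ r.-1 * n)) : nat) = (r <= logn p x).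
Proof.
move=> r_gt0 /andP[x_gt0 le_xd]; set v := logn p x.
have le_pv_x : p ^ v <= x := dvdn_leq x_gt0 (pfactor_dvdnn p x).
have lt_vd : v < d.+1.
  by rewrite ltnS (leq_trans _ le_xd) // (leq_trans _ le_pv_x) // ltnW // ltn_expl ?prime_gt1.
rewrite exchange_big /= (eq_bigr (fun j => (v == j + r.-1 : nat))) => [|j _].
  rewrite -(addnK r.-1 d.+1) -(big_addn _ _ _ predT (fun i => (v == i : nat))).
  by rewrite sum_nat_eq add1n prednK // (ltn_addr _ lt_vd) andbT.
rewrite big_nat (eq_bigr (fun n => (v == j + r.-1) * (x %/ p ^ (j + r.-1) == n))); last first.
  by move=> n /andP[n_gt0 _]; rewrite mulnA -expnD !mulnb -padic_factor_eq.
rewrite -big_nat -big_distrr /= sum_nat_eq; case: eqP => [<- | _]; rewrite ?mul0n // mul1n.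
by rewrite divn_gt0 ?expn_gt0 ?prime_gt0 // le_pv_x ltnS (leq_trans (leq_div _ _) le_xd).
Qed.

Lemma dp_padic_comp_expand i d l : l \in Par d ->
  dp_part p (padic_comp p i l) =
  \sum_(1 <= n < d.+1) \sum_(1 <= j < d.+1)
     (~~ (p %| n)) * (count_mem (p ^ i * n) l %/ p ^ j).
Proof.
rewrite mem_Par => /and3P[_ l_pos /eqP sum_l].
have le_sum : sumn (padic_comp p i l) <= d by rewrite -sum_l padic_comp_sumn.
have le_size : size (padic_comp p i l) <= d.
  by rewrite (leq_trans (padic_comp_size _ _ _)) // -sum_l size_le_sumn.
rewrite (dp_part_ext (prime_gt1 p_prime) le_sum le_size) big_nat [RHS]big_nat.
apply: eq_bigr => n /andP[n_gt0 _]; apply: eq_bigr => j _.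
by rewrite mult_padic_comp //; case: (~~ _); rewrite ?mul1n ?mul0n ?div0n.
Qed.

Lemma count_high_valuation_expand r d l : 0 < r -> l \in Par d ->
  count (fun x => r <= logn p x) l =
  \sum_(1 <= n < d.+1) \sum_(1 <= j < d.+1)
     (~~ (p %| n)) * count_mem (p ^ j * (p ^ r.-1 * n)) l.
Proof.
move=> r_gt0; rewrite mem_Par => /and3P[_ l_pos /eqP sum_l].
transitivity (\sum_(x <- l) \sum_(1 <= n < d.+1) \sum_(1 <= j < d.+1)
                ((~~ (p %| n)) * (x == p ^ j * (p ^ r.-1 * n)) : nat)).
  rewrite -sum_indicator; apply: eq_big_seq => x x_l.
  by rewrite high_valuation_indicator // (allP l_pos) // -sum_l mem_le_sumn.
rewrite exchange_big; apply: eq_bigr => n _; rewrite exchange_big; apply: eq_bigr => j _.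
by rewrite -sum_indicator big_distrr.
Qed.

End PrimeBase.

Theorem mainTheorem4 (p r d : nat) :
  prime p -> 1 <= r ->
  \sum_(lam <- Par d)
     (\sum_(0 <= i < r) len (padic_comp p i lam)
      + dp_part p (padic_comp p r.-1 lam))
  = ltot d.
Proof.
move=> p_prime r_gt0.
rewrite /ltot [RHS](eq_bigr _ (fun l _ => len_padic_split p r l)) !big_split /=.
congr (_ + _).
rewrite (eq_big_seq _ (fun l => dp_padic_comp_expand p_prime r.-1 (l := l))).
rewrite [RHS](eq_big_seq _ (fun l => count_high_valuation_expand p_prime (l := l) r_gt0)).
rewrite exchange_big [RHS]exchange_big big_nat [RHS]big_nat.
apply: eq_bigr => n /andP[n_gt0 _]; rewrite exchange_big [RHS]exchange_big.
(* compare term by term with the Glaisher identity, a = p^(r-1) n, t = p^j *)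
apply: eq_bigr => j _; rewrite -!big_distrr /= sum_Par_mult_div //.
  by rewrite muln_gt0 expn_gt0 prime_gt0.
by rewrite expn_gt0 prime_gt0.
Qed.
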